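(* For every $n\ge 1$, the $2$-structure $\mathscr{M}_n$ is terminating: for every discrete category $\mathscr{C}$, every infinite chain $t_1\xrightarrow{\alpha_1}t_2\xrightarrow{\alpha_2}t_3\to\cdots$ of morphisms in $\mathbb{F}_{\mathscr{C}}(\mathscr{M}_n)$ contains cofinitely many identity morphisms.
   Context: General framework: a $2$-structure $\langle\mathcal{F},\theta_{\mathcal{F}},\mathcal{T},\theta_{\mathcal{T}}\rangle$ consists of function symbols $\mathcal{F}$, term equations $\theta_{\mathcal{F}}$, labelled reduction rules $\mathcal{T}$ between congruence classes of terms, and equations $\theta_{\mathcal{T}}$ between reductions with equal source and target; over a category $\mathscr{C}$, reductions are generated from morphisms of $\mathscr{C}$ by function symbols, rule applications (with reductions substituted for the variables) and composition $\varphi\cdot\psi$ (diagrammatic order), and $\theta_{\mathcal{T}}$ always contains all instances of the identity, associativity, functoriality and naturality equations. $\mathbb{F}_{\mathscr{C}}(\mathcal{S})$ is the category whose objects are classes of terms over $\mathrm{Ob}(\mathscr{C})$ and whose morphisms are reductions modulo the congruence generated by $\theta_{\mathcal{T}}$. $\mathscr{M}_n$ (the $2$-structure for $n$-fold monoidal categories): binary function symbols $\otimes_1,\dots,\otimes_n$ and a nullary symbol $I$; term equations $A\otimes_i(B\otimes_iC)=(A\otimes_iB)\otimes_iC$, $A\otimes_iI=A$, $I\otimes_iA=A$ for $1\le i\le n$; for each $1\le i<j\le n$ a reduction rule (interchange) $\eta^{ij}_{A,B,C,D}:(A\otimes_jB)\otimes_i(C\otimes_jD)\to(A\otimes_iC)\otimes_j(B\otimes_iD)$;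 equations in $\theta_{\mathcal{T}}$ besides the mandatory ones: (internal unit) $\eta^{ij}_{A,B,I,I}=\eta^{ij}_{I,I,A,B}=1_{A\otimes_jB}$; (external unit) $\eta^{ij}_{A,I,B,I}=\eta^{ij}_{I,A,I,B}=1_{A\otimes_iB}$; (internal associativity) $(\eta^{ij}_{A,B,C,D}\otimes_i1_{E\otimes_jF})\cdot\eta^{ij}_{A\otimes_iC,B\otimes_iD,E,F}=(1_{A\otimes_jB}\otimes_i\eta^{ij}_{C,D,E,F})\cdot\eta^{ij}_{A,B,C\otimes_iE,D\otimes_iF}$; (external associativity) $\eta^{ij}_{A\otimes_jB,C,D\otimes_jE,F}\cdot(\eta^{ij}_{A,B,D,E}\otimes_j1_{C\otimes_iF})=\eta^{ij}_{A,B\otimes_jC,D,E\otimes_jF}\cdot(1_{A\otimes_iD}\otimes_j\eta^{ij}_{B,C,E,F})$; (giant hexagon) for $1\le i<j<k\le n$, as morphisms from $((A\otimes_kB)\otimes_j(C\otimes_kD))\otimes_i((E\otimes_kF)\otimes_j(G\otimes_kH))$ to $((A\otimes_iE)\otimes_j(C\otimes_iG))\otimes_k((B\otimes_iF)\otimes_j(D\otimes_iH))$: $(\eta^{jk}_{A,B,C,D}\otimes_i\eta^{jk}_{E,F,G,H})\cdot\eta^{ik}_{A\otimes_jC,B\otimes_jD,E\otimes_jG,F\otimes_jH}\cdot(\eta^{ij}_{A,C,E,G}\otimes_k\eta^{ij}_{B,D,F,H})=\eta^{ij}_{A\otimes_kB,C\otimes_kD,E\otimes_kF,G\otimes_kH}\cdot(\eta^{ik}_{A,B,E,F}\otimes_j\eta^{ik}_{C,D,G,H})\cdot\eta^{jk}_{A\otimes_iE,B\otimes_iF,C\otimes_iG,D\otimes_iH}$.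 *)

From mathcomp Require Import all_boot.
Set Implicit Arguments.
Unset Strict Implicit.
Unset Printing Implicit Defensive.

(* The 2-structure M_n over a discrete category C, whose set of objects is X.
   Tensor indices 1..n of the paper are represented by 'I_n (0..n-1). *)
Section Mn.
Variables (X : Type) (n : nat).

Inductive term : Type :=
  | Atom of X
  | Unit
  | Tens of 'I_n & term & term.

Inductive teq : term -> term -> Prop :=
  | teq_refl a : teq a a
  | teq_sym a b : teq a b -> teq b a
  | teq_trans a b c : teq a b -> teq b c -> teq a c
  | teq_tens i a a' b b' : teq a a' -> teq b b' -> teq (Tens i a b) (Tens i a' b')
  | teq_assoc i a b c : teq (Tens i a (Tens i b c)) (Tens i (Tens i a b) c)
  | teq_unitr i a : teq (Tens i a Unit) a
  | teq_unitl i a : teq (Tens i Unit a) a.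

(* Reductions: generated from the morphisms of C (identities 1_x, x in X, as C
   is discrete), by the function symbols (nullary I gives 1_I, binary ⊗_i),
   by applications of the interchange rule eta^{ij} with reductions substituted
   for its four variables, and by composition (diagrammatic order). *)
Inductive red : Type :=
  | RAtom of X
  | RUnit
  | RTens of 'I_n & red & red
  | REta of 'I_n & 'I_n & red & red & red & red
  | RComp of red & red.

Fixpoint src (r : red) : term :=
  match r with
  | RAtom x => Atom x
  | RUnit => Unit
  | RTens i f g => Tens i (src f) (src g)
  | REta i j a b c d => Tens i (Tens j (src a) (src b)) (Tens j (src c) (src d))
  | RComp f _ => src f
  end.

Fixpoint tgt (r : red) : term :=
  match r with
  | RAtom x => Atom x
  | RUnit => Unit
  | RTens i f g => Tens i (tgt f) (tgt g)
  | REta i j a b c d => Tens j (Tens i (tgt a) (tgt c)) (Tens i (tgt b) (tgt d))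
  | RComp _ g => tgt g
  end.

Fixpoint rid (t : term) : red :=
  match t with
  | Atom x => RAtom x
  | Unit => RUnit
  | Tens i a b => RTens i (rid a) (rid b)
  end.

(* well-formed (well-typed) reductions: eta^{ij} only for i < j, and
   composites only when the target and source agree as objects (classes). *)
Inductive wf : red -> Prop :=
  | wf_atom x : wf (RAtom x)
  | wf_unit : wf RUnit
  | wf_tens i f g : wf f -> wf g -> wf (RTens i f g)
  | wf_eta (i j : 'I_n) a b c d : (i < j)%N -> wf a -> wf b -> wf c -> wf d ->
      wf (REta i j a b c d)
  | wf_comp f g : wf f -> wf g -> teq (tgt f) (src g) -> wf (RComp f g).

Definition eta (i j : 'I_n) (A B C D : term) : red :=
  REta i j (rid A) (rid B) (rid C) (rid D).

(* The generating equations theta_T (plus the term equations lifted to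
   reductions).  Typing is imposed in [req] via [wf] of both sides. *)
Inductive ax : red -> red -> Prop :=
  | ax_idl A f : ax (RComp (rid A) f) f
  | ax_idr B f : ax (RComp f (rid B)) f
  | ax_assoc f g h : ax (RComp (RComp f g) h) (RComp f (RComp g h))
  | ax_funct i f f' g g' :
      ax (RTens i (RComp f f') (RComp g g')) (RComp (RTens i f g) (RTens i f' g'))
  | ax_natl i j a b c d :
      ax (REta i j a b c d)
         (RComp (RTens i (RTens j a b) (RTens j c d))
                (eta i j (tgt a) (tgt b) (tgt c) (tgt d)))
  | ax_natr i j a b c d :
      ax (REta i j a b c d)
         (RComp (eta i j (src a) (src b) (src c) (src d))
                (RTens j (RTens i a c) (RTens i b d)))
  | ax_tassoc i f g h : ax (RTens i f (RTens i g h)) (RTens i (RTens i f g) h)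
  | ax_tunitr i f : ax (RTens i f RUnit) f
  | ax_tunitl i f : ax (RTens i RUnit f) f
  | ax_iunit1 i j A B : ax (eta i j A B Unit Unit) (rid (Tens j A B))
  | ax_iunit2 i j A B : ax (eta i j Unit Unit A B) (rid (Tens j A B))
  | ax_eunit1 i j A B : ax (eta i j A Unit B Unit) (rid (Tens i A B))
  | ax_eunit2 i j A B : ax (eta i j Unit A Unit B) (rid (Tens i A B))
  | ax_iassoc i j A B C D E F :
      ax (RComp (RTens i (eta i j A B C D) (rid (Tens j E F)))
                (eta i j (Tens i A C) (Tens i B D) E F))
         (RComp (RTens i (rid (Tens j A B)) (eta i j C D E F))
                (eta i j A B (Tens i C E) (Tens i D F)))
  | ax_eassoc i j A B C D E F :
      ax (RComp (eta i j (Tens j A B) C (Tens j D E) F)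
                (RTens j (eta i j A B D E) (rid (Tens i C F))))
         (RComp (eta i j A (Tens j B C) D (Tens j E F))
                (RTens j (rid (Tens i A D)) (eta i j B C E F)))
  | ax_hex i j k A B C D E F G H :
      ax (RComp (RComp (RTens i (eta j k A B C D) (eta j k E F G H))
                       (eta i k (Tens j A C) (Tens j B D) (Tens j E G) (Tens j F H)))
                (RTens k (eta i j A C E G) (eta i j B D F H)))
         (RComp (RComp (eta i j (Tens k A B) (Tens k C D) (Tens k E F) (Tens k G H))
                       (RTens j (eta i k A B E F) (eta i k C D G H)))
                (eta j k (Tens i A E) (Tens i B F) (Tens i C G) (Tens i D H))).

Inductive req : red -> red -> Prop :=
  | req_ax f g : ax f g -> wf f -> wf g -> req f g
  | req_refl f : wf f -> req f f
  | req_sym f g : req f g -> req g f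
  | req_trans f g h : req f g -> req g h -> req f h
  | req_tens i f f' g g' : req f f' -> req g g' -> req (RTens i f g) (RTens i f' g')
  | req_eta (i j : 'I_n) a a' b b' c c' d d' : (i < j)%N ->
      req a a' -> req b b' -> req c c' -> req d d' ->
      req (REta i j a b c d) (REta i j a' b' c' d')
  | req_comp f f' g g' : req f f' -> req g g' -> teq (tgt f) (src g) ->
      req (RComp f g) (RComp f' g').

End Mn.

From mathcomp Require Import all_boot zify.
From Stdlib Require Import Setoid Morphisms Classical.

(* Give every pair of atoms of a term the weight n - i, where ⊗_i is the
   operation separating them, and let the weight of the term be the sum.  It
   is invariant under the term equations, and an interchange η^{ij} with
   i < j lowers it by (j - i)(|A||D| + |B||C|), |.| counting atoms; so no
   reduction raises the weight, and one preserving it only uses interchanges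
   with |A||D| = |B||C| = 0, which the unit equations identify with
   identities.  Along an infinite chain the weights are eventually constant,
   and from then on every morphism is an identity. *)

Set Implicit Arguments.
Unset Strict Implicit.
Unset Printing Implicit Defensive.

Lemma nonincreasing_eventually_const (h : nat -> nat) :
  (forall k, h k.+1 <= h k) -> exists N, forall k, N <= k -> h k = h N.
Proof.
move=> h_dec.
have mono k m : k <= m -> h m <= h k.
  move=> /subnKC <-; elim: (m - k) => [|d IHd]; first by rewrite addn0.
  by rewrite addnS (leq_trans (h_dec _)).
apply: NNPP => not_const.
have drop k : exists m, h m < h k.
  apply: NNPP => no_drop; apply: not_const; exists k => m km.
  have := mono k m km; have : ~ h m < h k by move=> lt; apply: no_drop; exists m.
  lia.
suff: forall v k, h k <= v -> False by move/(_ (h 0) 0 (leqnn _)).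
elim=> [|v IHv] k hk; have [m hm] := drop k; [lia | apply: (IHv m); lia].
Qed.

Section Termination.
Variables (X : Type) (n : nat).
Notation term := (term X n).
Notation red := (red X n).

#[local] Instance teq_Equivalence : Equivalence (@teq X n).
Proof. split; [exact: teq_refl | exact: teq_sym | exact: teq_trans]. Qed.

#[local] Instance Tens_teq_proper (i : 'I_n) :
  Proper (@teq X n ==> @teq X n ==> @teq X n) (Tens i).
Proof. by move=> a a' Ha b b' Hb; apply: teq_tens. Qed.

#[local] Hint Resolve teq_refl : core.

Fixpoint atoms (t : term) : nat :=
  match t with Atom _ => 1 | Unit => 0 | Tens _ a b => atoms a + atoms b end.

Fixpoint weight (t : term) : nat :=
  match t with
  | Atom _ | Unit => 0
  | Tens i a b => weight a + weight b + atoms a * atoms b * (n - i)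
  end.

Lemma atoms_teq (a b : term) : teq a b -> atoms a = atoms b.
Proof. by elim=> //= *; lia. Qed.

Lemma weight_teq (a b : term) : teq a b -> weight a = weight b.
Proof.
elim=> //= {a b}; try by move=> *; nia.
by move=> i a a' b b' /atoms_teq Ea -> /atoms_teq Eb ->; rewrite Ea Eb.
Qed.

Lemma atoms0_teq_Unit (a : term) : atoms a = 0 -> teq a (Unit X n).
Proof.
elim: a => [//|_ //|i a IHa b IHb /= ab0].
have [/IHa -> /IHb ->] : atoms a = 0 /\ atoms b = 0 by lia.
by rewrite teq_unitl.
Qed.

Lemma weight_interchange (i j : 'I_n) (A B C D : term) : i <= j ->
  weight (Tens i (Tens j A B) (Tens j C D)) =
  weight (Tens j (Tens i A C) (Tens i B D))
    + (atoms A * atoms D + atoms B * atoms C) * (j - i).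
Proof.
move=> ij /=; have jn := ltn_ord j.
have -> /= : n - i = (n - j) + (j - i) by lia.
nia.
Qed.

Lemma interchange_teq_degenerate (i j : 'I_n) (A B C D : term) :
  atoms A * atoms D + atoms B * atoms C = 0 ->
  teq (Tens i (Tens j A B) (Tens j C D)) (Tens j (Tens i A C) (Tens i B D)).
Proof.
move=> /eqP; rewrite addn_eq0 !muln_eq0.
case/andP=> /orP[] /eqP/atoms0_teq_Unit -> /orP[] /eqP/atoms0_teq_Unit ->;
by rewrite ?teq_unitl ?teq_unitr.
Qed.

Lemma src_rid (a : term) : src (rid a) = a.
Proof. by elim: a => //= i a -> b ->. Qed.

Lemma tgt_rid (a : term) : tgt (rid a) = a.
Proof. by elim: a => //= i a -> b ->. Qed.

Lemma wf_rid (a : term) : wf (rid a).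
Proof. by elim: a => *; constructor. Qed.

Lemma req_rid (a b : term) : teq a b -> req (rid a) (rid b).
Proof.
elim=> /= {a b}.
- by move=> a; apply/req_refl/wf_rid.
- by move=> a b _; apply: req_sym.
- by move=> a b c _ ab _; apply: req_trans ab.
- by move=> i a a' b b' _ aa' _ bb'; apply: req_tens.
- by move=> i a b c; apply: req_ax (ax_tassoc _ _ _ _) _ _; do 4?constructor;
    apply: wf_rid.
- by move=> i a; apply: req_ax (ax_tunitr _ _) _ (wf_rid _); do 2?constructor;
    apply: wf_rid.
- by move=> i a; apply: req_ax (ax_tunitl _ _) _ (wf_rid _); do 2?constructor;
    apply: wf_rid.
Qed.

Lemma wf_eta (i j : 'I_n) (A B C D : term) : i < j -> wf (eta i j A B C D).
Proof. by move=> ij; constructor => //; apply: wf_rid. Qed.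

Lemma eta_degenerate_req (i j : 'I_n) (A B C D : term) : i < j ->
  atoms A * atoms D + atoms B * atoms C = 0 ->
  req (eta i j A B C D) (rid (Tens i (Tens j A B) (Tens j C D))).
Proof.
move=> ij /eqP; rewrite addn_eq0 !muln_eq0 => /andP[AD BC].
have unit_ax A' B' C' D' Y : teq A A' -> teq B B' -> teq C C' -> teq D D' ->
    ax (eta i j A' B' C' D') (rid Y) ->
    teq Y (Tens i (Tens j A' B') (Tens j C' D')) ->
    req (eta i j A B C D) (rid (Tens i (Tens j A B) (Tens j C D))).
  move=> AA' BB' CC' DD' eta_Y Y_src.
  apply: req_trans (_ : req _ (eta i j A' B' C' D')) _.
    by apply: req_eta => //; apply: req_rid.
  apply: req_trans (req_ax eta_Y (wf_eta _ _ _ _ ij) (wf_rid _)) (req_rid _).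
  by rewrite Y_src AA' BB' CC' DD'.
move: AD BC => /orP[] /eqP/atoms0_teq_Unit hAD /orP[] /eqP/atoms0_teq_Unit hBC.
- apply: unit_ax hAD hBC (teq_refl _) (teq_refl _) (ax_iunit2 _ _ _ _) _.
  by rewrite !teq_unitl.
- apply: unit_ax hAD (teq_refl _) hBC (teq_refl _) (ax_eunit2 _ _ _ _) _.
  by rewrite !teq_unitl.
- apply: unit_ax (teq_refl _) hBC (teq_refl _) hAD (ax_eunit1 _ _ _ _) _.
  by rewrite !teq_unitr.
- apply: unit_ax (teq_refl _) (teq_refl _) hBC hAD (ax_iunit1 _ _ _ _) _.
  by rewrite teq_unitl teq_unitr.
Qed.

Lemma atoms_tgt (f : red) : wf f -> atoms (tgt f) = atoms (src f).
Proof.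
elim=> //= {f}; try by move=> *; lia.
by move=> f g _ IHf _ IHg /atoms_teq; lia.
Qed.

Lemma weight_tgt_le (f : red) : wf f -> weight (tgt f) <= weight (src f).
Proof.
elim=> //= {f}.
- by move=> i f g wf_f IHf wf_g IHg; rewrite !atoms_tgt //; lia.
- move=> i j a b c d ij wf_a IHa wf_b IHb wf_c IHc wf_d IHd.
  have := weight_interchange (src a) (src b) (src c) (src d) (ltnW ij).
  by rewrite /= !atoms_tgt //; nia.
- by move=> f g _ IHf _ IHg /weight_teq; lia.
Qed.

Lemma weight_Tens_eq (i : 'I_n) (f g : red) : wf f -> wf g ->
  weight (tgt (RTens i f g)) = weight (src (RTens i f g)) ->
  weight (tgt f) = weight (src f) /\ weight (tgt g) = weight (src g).
Proof.
move=> wf_f wf_g; rewrite /= !atoms_tgt //.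
by move: (weight_tgt_le wf_f) (weight_tgt_le wf_g); lia.
Qed.

Lemma weight_comp_eq (f g : red) : wf f -> wf g -> teq (tgt f) (src g) ->
  weight (tgt g) = weight (src f) ->
  weight (tgt f) = weight (src f) /\ weight (tgt g) = weight (src g).
Proof.
move=> wf_f wf_g /weight_teq.
by move: (weight_tgt_le wf_f) (weight_tgt_le wf_g); lia.
Qed.

Lemma weight_eta_eq (i j : 'I_n) (a b c d : red) : i < j ->
  wf a -> wf b -> wf c -> wf d ->
  weight (tgt (REta i j a b c d)) = weight (src (REta i j a b c d)) ->
  [/\ weight (tgt a) = weight (src a), weight (tgt b) = weight (src b),
      weight (tgt c) = weight (src c), weight (tgt d) = weight (src d)
    & atoms (src a) * atoms (src d) + atoms (src b) * atoms (src c) = 0].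
Proof.
move=> ij wf_a wf_b wf_c wf_d.
move: (weight_interchange (src a) (src b) (src c) (src d) (ltnW ij)).
move: (weight_tgt_le wf_a) (weight_tgt_le wf_b) (weight_tgt_le wf_c).
move: (weight_tgt_le wf_d).
have : 0 < j - i by rewrite subn_gt0.
rewrite /= !atoms_tgt //.
move: (atoms (src a) * atoms (src d) + _) (j - i) => S dij dij_gt0 *.
have /eqP : S * dij = 0 by lia.
rewrite muln_eq0 (gtn_eqF dij_gt0) orbF => /eqP S0.
by split; lia.
Qed.

Lemma weight_eq_teq (f : red) : wf f ->
  weight (tgt f) = weight (src f) -> teq (src f) (tgt f).
Proof.
elim=> //= {f}.
- move=> i f g wf_f IHf wf_g IHg /(weight_Tens_eq wf_f wf_g)[Ef Eg].
  by apply: teq_tens; [apply: IHf | apply: IHg].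
- move=> i j a b c d ij wf_a IHa wf_b IHb wf_c IHc wf_d IHd E.
  have [Ea Eb Ec Ed degenerate] := weight_eta_eq ij wf_a wf_b wf_c wf_d E.
  rewrite -(IHa Ea) -(IHb Eb) -(IHc Ec) -(IHd Ed).
  exact: interchange_teq_degenerate degenerate.
- move=> f g wf_f IHf wf_g IHg fg /(weight_comp_eq wf_f wf_g fg)[Ef Eg].
  exact: teq_trans (IHf Ef) (teq_trans fg (IHg Eg)).
Qed.

Lemma weight_eq_req_rid (f : red) : wf f ->
  weight (tgt f) = weight (src f) -> req f (rid (src f)).
Proof.
elim=> /= {f}.
- by move=> x _; apply/req_refl/wf_atom.
- by move=> _; apply/req_refl/wf_unit.
- move=> i f g wf_f IHf wf_g IHg /(weight_Tens_eq wf_f wf_g)[Ef Eg].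
  by apply: req_tens; [apply: IHf | apply: IHg].
- move=> i j a b c d ij wf_a IHa wf_b IHb wf_c IHc wf_d IHd E.
  have [Ea Eb Ec Ed degenerate] := weight_eta_eq ij wf_a wf_b wf_c wf_d E.
  apply: req_trans (_ : req _ (eta i j (src a) (src b) (src c) (src d))) _.
    by apply: req_eta; [| apply: IHa | apply: IHb | apply: IHc | apply: IHd].
  exact: eta_degenerate_req ij degenerate.
- move=> f g wf_f IHf wf_g IHg fg /(weight_comp_eq wf_f wf_g fg)[Ef Eg].
  have ff := weight_eq_teq wf_f Ef.
  apply: req_trans (_ : req _ (RComp (rid (src f)) (rid (src g)))) _.
    exact: req_comp (IHf Ef) (IHg Eg) fg.
  apply: req_trans (req_rid (_ : teq (src g) (src f))); last by rewrite ff fg.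
  apply: req_ax (ax_idl _ _) _ (wf_rid _).
  by apply: wf_comp; rewrite ?tgt_rid ?src_rid ?ff //; apply: wf_rid.
Qed.

End Termination.

Theorem proposition5p4 (n : nat) (hn : (1 <= n)%N) (X : Type)
    (t : nat -> term X n) (alpha : nat -> red X n) :
  (forall k, wf (alpha k)) ->
  (forall k, teq (src (alpha k)) (t k)) ->
  (forall k, teq (tgt (alpha k)) (t k.+1)) ->
  exists N, forall k, (N <= k)%N -> req (alpha k) (rid (t k)).
Proof.
move=> wf_alpha src_alpha tgt_alpha.
have weight_src k : weight (src (alpha k)) = weight (t k).
  exact: weight_teq (src_alpha k).
have weight_tgt k : weight (tgt (alpha k)) = weight (t k.+1).
  exact: weight_teq (tgt_alpha k).
have [N weight_const] : exists N, forall k, N <= k -> weight (t k) = weight (t N).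
  apply: nonincreasing_eventually_const => k.
  by rewrite -weight_tgt -weight_src weight_tgt_le.
exists N => k Nk.
have E : weight (tgt (alpha k)) = weight (src (alpha k)).
  by rewrite weight_src weight_tgt !weight_const // (leqW Nk).
exact: req_trans (weight_eq_req_rid (wf_alpha k) E) (req_rid (src_alpha k)).
Qed.
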